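(* Let $C$ be a Plotkin-optimal projective linear code over $\mathbb{Z}_4$ of type $4^{k_1}2^{k_2}$ with exactly two nonzero Lee weights, and let $\Phi(C)\subseteq\mathbb{F}_2^{2n}$ be its Gray image. Then there is an integer $t$ with $1\le t\le k_1$ such that $\Phi(C)$ is a binary code of length $2^{2k_1+k_2}-2^{2k_1+k_2-t}$ with $2^{2k_1+k_2}$ codewords, whose nonzero Hamming weights are exactly $w_1=2^{2k_1+k_2-1}-2^{2k_1+k_2-t-1}$ and $w_2=2^{2k_1+k_2-1}$, occurring $2^{2k_1+k_2}-2^t$ and $2^t-1$ times respectively. In particular, these are the parameters and weight distribution of a binary two-weight linear code of type SU1 in the sense of Calderbank and Kantor, i.e. with $q=2$, dimension $l=2k_1+k_2$, length $\frac{q^l-q^m}{q-1}$, weights $q^{l-1}-q^{m-1}$ and $q^{l-1}$ with frequencies $q^l-q^{l-m}$ and $q^{l-m}-1$, where $m=2k_1+k_2-t$.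
   Context: A linear code of length $n$ over $\mathbb{Z}_4$ is a $\mathbb{Z}_4$-submodule of $\mathbb{Z}_4^n$, of type $4^{k_1}2^{k_2}$ if isomorphic to $\mathbb{Z}_4^{k_1}\times\mathbb{Z}_2^{k_2}$. Lee weight: $w_L(0)=0,w_L(1)=1,w_L(2)=2,w_L(3)=1$, additive on vectors; $d_L(C)$ is the minimum nonzero Lee weight. $C$ is Plotkin-optimal if $d_L(C)=\lfloor\frac{|C|}{|C|-1}n\rfloor$; $C$ is projective if $d_L(C^\perp)\ge3$ where the dual is with respect to $\sum x_iy_i\in\mathbb{Z}_4$. The Gray map $\phi:\mathbb{Z}_4\to\mathbb{F}_2^2$ is $\phi(0)=(0,0),\phi(1)=(0,1),\phi(2)=(1,1),\phi(3)=(1,0)$, and $\Phi:\mathbb{Z}_4^n\to\mathbb{F}_2^{2n}$ applies $\phi$ coordinatewise; it maps Lee weight to Hamming weight. *)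

From HB Require Import structures.
From mathcomp Require Import all_boot all_order all_algebra.
Set Implicit Arguments. Unset Strict Implicit. Unset Printing Implicit Defensive.
Import GRing.Theory.
Local Open Scope ring_scope.

(* A linear code over Z4 of length n: a Z4-submodule of Z4^n
   (for Z4, submodule = additive subgroup). *)
Definition Z4_linear (n : nat) (C : {set 'rV['Z_4]_n}) : Prop :=
  0 \in C /\ (forall x y, x \in C -> y \in C -> x - y \in C).

(* C has type 4^k1 2^k2: C is isomorphic (as a Z4-module, i.e. as an abelian
   group) to Z4^k1 x Z2^k2. *)
Definition Z4_type (n k1 k2 : nat) (C : {set 'rV['Z_4]_n}) : Prop :=
  exists f : 'rV['Z_4]_k1 * 'rV['Z_2]_k2 -> 'rV['Z_4]_n,
    [/\ (forall a b, f (a.1 + b.1, a.2 + b.2) = f a + f b),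
        injective f &
        (forall x, x \in C <-> exists a, f a = x)].

Definition leeZ4 (x : 'Z_4) : nat :=
  match val x with 0 => 0 | 1 => 1 | 2 => 2 | _ => 1 end%N.

Definition wL (n : nat) (v : 'rV['Z_4]_n) : nat := (\sum_(i < n) leeZ4 (v ord0 i))%N.

(* Minimum nonzero Lee weight (the default 2n is an upper bound for all Lee
   weights; it only matters if C has no nonzero codeword). *)
Definition dL (n : nat) (C : {set 'rV['Z_4]_n}) : nat :=
  \big[minn/(2 * n)%N]_(c in C | c != 0) wL c.

Definition plotkin_optimal (n : nat) (C : {set 'rV['Z_4]_n}) : Prop :=
  dL C = ((#|C| * n) %/ (#|C| - 1))%N.

Definition dual (n : nat) (C : {set 'rV['Z_4]_n}) : {set 'rV['Z_4]_n} :=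
  [set y : 'rV['Z_4]_n | [forall x in C, (\sum_(i < n) x ord0 i * y ord0 i == 0)]].

(* Projective: d_L(C^perp) >= 3, i.e. every nonzero dual codeword has Lee
   weight at least 3 (minimum over the empty set read as +infinity). *)
Definition projective (n : nat) (C : {set 'rV['Z_4]_n}) : Prop :=
  forall y, y \in dual C -> y != 0 -> (3 <= wL y)%N.

Definition two_lee_weights (n : nat) (C : {set 'rV['Z_4]_n}) : Prop :=
  exists w1 w2 : nat, [/\ w1 <> w2,
    (exists c, [/\ c \in C, c != 0 & wL c = w1]),
    (exists c, [/\ c \in C, c != 0 & wL c = w2]) &
    (forall c, c \in C -> c != 0 -> wL c = w1 \/ wL c = w2)].

(* Gray map phi : Z4 -> F2^2, phi(0)=00, phi(1)=01, phi(2)=11, phi(3)=10.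
   A binary word of length 2n is indexed by 'I_n * bool: coordinate (i,false)
   is the first bit of phi(v_i), (i,true) the second. *)
Definition gray_bit (x : 'Z_4) (b : bool) : bool :=
  match val x with
  | 0 => false
  | 1 => b
  | 2 => true
  | _ => ~~ b
  end%N.

Definition Gray (n : nat) (v : 'rV['Z_4]_n) : {ffun 'I_n * bool -> bool} :=
  [ffun p => gray_bit (v ord0 p.1) p.2].

Definition GrayImage (n : nat) (C : {set 'rV['Z_4]_n}) :
  {set {ffun 'I_n * bool -> bool}} := [set Gray c | c in C].

Definition wH (n : nat) (x : {ffun 'I_n * bool -> bool}) : nat := #|[set p | x p]|.

From mathcomp Require Import all_boot all_order all_algebra.
From mathcomp Require Import zify.
Import Order.TTheory GRing.Theory Num.Theory.
Set Implicit Arguments. Unset Strict Implicit. Unset Printing Implicit Defensive.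
Local Open Scope ring_scope.

(* For a in Z4 let leecos a := 1 - w_L(a), the real part of i^a.  Since the
   dual code has no nonzero word of Lee weight at most 2, orthogonality of
   characters gives three moment identities over C:
     sum (n - w_L c) = 0,   2 sum (n - w_L c)^2 = |C| n,   sum (n - w_L (2c)) = 0.
   The codeword 0 alone shows |C| >= 2n in the second one, so Plotkin
   optimality makes the smaller weight equal to n.  The first two identities
   then give the other weight w = |C|/2 = 2^(K-1) and B (w - n) = n for its
   frequency B; as B and B + 1 are coprime, B + 1 = 2^t divides 2^(K-1).
   The third identity shows that (B + 1) times the number of codewords of
   order at most 2 is at most |C|; there are at least 2^(k1+k2) of those,
   whence t <= k1.  The Gray map is an injective isometry from Lee to Hamming
   weight, so the distribution carries over to Phi(C). *)

Lemma Z4_ind (P : 'Z_4 -> Prop) : P 0 -> P 1 -> P 2 -> P 3 -> forall a, P a.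
Proof.
move=> P0 P1 P2 P3 [[|[|[|[|m]]]] lt_m4] //.
- by rewrite (_ : Ordinal lt_m4 = 0) //; apply: val_inj.
- by rewrite (_ : Ordinal lt_m4 = 1) //; apply: val_inj.
- by rewrite (_ : Ordinal lt_m4 = 2) //; apply: val_inj.
- by rewrite (_ : Ordinal lt_m4 = 3) //; apply: val_inj.
Qed.

Lemma Z2_ind (P : 'Z_2 -> Prop) : P 0 -> P 1 -> forall a, P a.
Proof.
move=> P0 P1 [[|[|m]] lt_m2] //.
- by rewrite (_ : Ordinal lt_m2 = 0) //; apply: val_inj.
- by rewrite (_ : Ordinal lt_m2 = 1) //; apply: val_inj.
Qed.

Lemma leeN a : leeZ4 (- a) = leeZ4 a.
Proof. by elim/Z4_ind: a. Qed.

Lemma leeD a b : (leeZ4 (a + b)%R <= leeZ4 a + leeZ4 b)%N.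
Proof. by elim/Z4_ind: a; elim/Z4_ind: b. Qed.

Lemma lee_eq0 a : (leeZ4 a == 0)%N = (a == 0).
Proof. by elim/Z4_ind: a. Qed.

Lemma lee_le2 a : (leeZ4 a <= 2)%N.
Proof. by elim/Z4_ind: a. Qed.

Lemma Z4_neq0_double (a : 'Z_4) : a != 0 -> a = 2 \/ a + a = 2.
Proof. by elim/Z4_ind: a => // _; [right | left | right]; apply: val_inj. Qed.

Definition leecos (a : 'Z_4) : int := 1 - (leeZ4 a)%:Z.

Lemma leecosD2 a : leecos (a + 2) = - leecos a.
Proof. by elim/Z4_ind: a. Qed.

Lemma leecos_mul a b : leecos a * leecos b *+ 2 = leecos (a + b) + leecos (a - b).
Proof. by elim/Z4_ind: a; elim/Z4_ind: b. Qed.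

Definition Z2_to_2Z4 (a : 'Z_2) : 'Z_4 := (val a)%:R * 2.

Lemma Z2_to_2Z4_inj : injective Z2_to_2Z4.
Proof. by move=> a b; elim/Z2_ind: a; elim/Z2_ind: b => // /(congr1 val). Qed.

Lemma Z2_to_2Z4_double a : Z2_to_2Z4 a + Z2_to_2Z4 a = 0.
Proof. by elim/Z2_ind: a; apply: val_inj. Qed.

Definition dot n (x y : 'rV['Z_4]_n) : 'Z_4 := \sum_(i < n) x 0 i * y 0 i.

Lemma dotDl n (x y z : 'rV['Z_4]_n) : dot (x + y) z = dot x z + dot y z.
Proof. by rewrite /dot -big_split; apply: eq_bigr => i _; rewrite mxE mulrDl. Qed.

Lemma dotDr n (x y z : 'rV['Z_4]_n) : dot x (y + z) = dot x y + dot x z.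
Proof. by rewrite /dot -big_split; apply: eq_bigr => i _; rewrite mxE mulrDr. Qed.

Lemma dotNr n (x y : 'rV['Z_4]_n) : dot x (- y) = - dot x y.
Proof. by rewrite /dot -sumrN; apply: eq_bigr => i _; rewrite mxE mulrN. Qed.

Lemma dot_delta n (x : 'rV['Z_4]_n) j : dot x (delta_mx 0 j) = x 0 j.
Proof.
rewrite /dot (bigD1 j) //= big1 => [|i /negPf nij]; by rewrite !mxE ?eqxx ?nij ?mulr0 ?mulr1 ?addr0.
Qed.

Lemma in_dual n (C : {set 'rV['Z_4]_n}) y : (y \in dual C) = [forall x in C, dot x y == 0].
Proof. by rewrite inE. Qed.

Lemma zero_in_dual n (C : {set 'rV['Z_4]_n}) : 0 \in dual C.
Proof.
by rewrite in_dual; apply/forall_inP => c _; rewrite /dot big1 // => i _; rewrite mxE mulr0.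
Qed.

Lemma wL0 n : wL (0 : 'rV['Z_4]_n) = 0%N.
Proof. by rewrite /wL big1 // => i _; rewrite mxE. Qed.

Lemma wL_eq0 n (x : 'rV['Z_4]_n) : (wL x == 0%N) = (x == 0).
Proof.
apply/idP/idP => [|/eqP ->]; last by rewrite wL0.
rewrite /wL sum_nat_eq0 => /forallP x0; apply/eqP/rowP => i.
by have := x0 i; rewrite /= lee_eq0 mxE => /eqP.
Qed.

Lemma wLD n (x y : 'rV['Z_4]_n) : (wL (x + y) <= wL x + wL y)%N.
Proof. by rewrite /wL -big_split /=; apply: leq_sum => i _; rewrite mxE leeD. Qed.

Lemma wLN n (x : 'rV['Z_4]_n) : wL (- x) = wL x.
Proof. by apply: eq_bigr => i _; rewrite mxE leeN. Qed.

Lemma wL_delta n (j : 'I_n) : wL (delta_mx 0 j : 'rV['Z_4]_n) = 1%N.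
Proof.
by rewrite /wL (bigD1 j) //= big1 => [|i /negPf nij]; rewrite !mxE ?eqxx ?nij ?addn0.
Qed.

Lemma wL_le n (x : 'rV['Z_4]_n) : (wL x <= 2 * n)%N.
Proof.
rewrite /wL mulnC -[X in (_ <= X * _)%N]card_ord -sum_nat_const.
by apply: leq_sum => i _; exact: lee_le2.
Qed.

Lemma sub_wL_sum_leecos n (x : 'rV['Z_4]_n) :
  n%:Z - (wL x)%:Z = \sum_(j < n) leecos (x 0 j).
Proof.
by rewrite sumrB sumr_const card_ord natz /wL (big_morph Posz PoszD (erefl 0%:Z)).
Qed.

Lemma Z4_linearD n (C : {set 'rV['Z_4]_n}) x y :
  Z4_linear C -> x \in C -> y \in C -> x + y \in C.
Proof. by case=> C0 CB xC yC; rewrite -[y]opprK -[- y]sub0r CB ?CB. Qed.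

Section Orthogonality.
Variables (n : nat) (C : {set 'rV['Z_4]_n}).
Hypothesis linC : Z4_linear C.

Lemma sum_leecos_dot y :
  \sum_(c in C) leecos (dot c y) = if y \in dual C then #|C|%:Z else 0.
Proof.
case: ifP => [|/negbT].
  rewrite in_dual => /forall_inP yC; rewrite -natz -sumr_const.
  by apply: eq_bigr => c /yC /eqP ->.
rewrite in_dual negb_forall_in => /exists_inP [u uC /Z4_neq0_double du].
have [v vC dv] : exists2 v, v \in C & dot v y = 2.
  by case: du => ?; [exists u | exists (u + u)]; rewrite ?dotDl ?Z4_linearD.
have shiftC c : (c + v \in C) = (c \in C).
  apply/idP/idP => [cvC|cC]; last exact: Z4_linearD.
  by rewrite -(addrK v c); case: linC => _; apply.
set S := LHS; have : S = - S.
  rewrite {1}/S (reindex_inj (addIr v)) /=; under eq_bigl do rewrite shiftC.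
  by rewrite -sumrN; apply: eq_bigr => c _; rewrite dotDl dv leecosD2.
lia.
Qed.

Hypothesis projC : projective C.

Lemma sum_leecos_dot_light y : y != 0 -> (wL y <= 2)%N ->
  \sum_(c in C) leecos (dot c y) = 0.
Proof.
move=> y0 wy; rewrite sum_leecos_dot; case: ifP => // yC.
by have := projC yC y0; rewrite leqNgt ltnS wy.
Qed.

Lemma sum_leecos_delta j : \sum_(c in C) leecos (dot c (delta_mx 0 j)) = 0.
Proof.
apply: sum_leecos_dot_light; last by rewrite wL_delta.
by rewrite -wL_eq0 wL_delta.
Qed.

Lemma sum_leecos_deltaD j k :
  \sum_(c in C) leecos (dot c (delta_mx 0 j + delta_mx 0 k)) = 0.
Proof.
apply: sum_leecos_dot_light; last by apply: leq_trans (wLD _ _) _; rewrite !wL_delta.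
apply/eqP => /rowP/(_ j)/eqP; rewrite !mxE !eqxx /=.
by case: (j == k).
Qed.

Lemma sum_leecos_deltaB j k :
  \sum_(c in C) leecos (dot c (delta_mx 0 j - delta_mx 0 k)) = #|C|%:Z *+ (j == k).
Proof.
have [<-|njk] := eqVneq j k; first by rewrite subrr sum_leecos_dot zero_in_dual.
apply: sum_leecos_dot_light; last by apply: leq_trans (wLD _ _) _; rewrite wLN !wL_delta.
by apply/eqP => /rowP/(_ j)/eqP; rewrite !mxE !eqxx /= eq_sym (negPf njk).
Qed.

End Orthogonality.

Section LeeMoments.
Variables (n : nat) (C : {set 'rV['Z_4]_n}).
Hypotheses (linC : Z4_linear C) (projC : projective C).

Lemma sum_dev_wL : \sum_(c in C) (n%:Z - (wL c)%:Z) = 0.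
Proof.
under eq_bigr do rewrite sub_wL_sum_leecos.
rewrite exchange_big big1 //= => j _.
by rewrite -[RHS](sum_leecos_delta linC projC j); apply: eq_bigr => c _; rewrite dot_delta.
Qed.

Lemma sum_dev_wL_double : \sum_(c in C) (n%:Z - (wL (c + c))%:Z) = 0.
Proof.
under eq_bigr do rewrite sub_wL_sum_leecos.
rewrite exchange_big big1 //= => j _.
rewrite -[RHS](sum_leecos_deltaD linC projC j j); apply: eq_bigr => c _.
by rewrite dotDr dot_delta mxE.
Qed.

Lemma sum_sqr_dev_wL : \sum_(c in C) (n%:Z - (wL c)%:Z) ^+ 2 *+ 2 = (#|C| * n)%:Z.
Proof.
have sqr_dev c : (n%:Z - (wL c)%:Z) ^+ 2 *+ 2 = \sum_(j < n) \sum_(k < n)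
    (leecos (dot c (delta_mx 0 j + delta_mx 0 k)) + leecos (dot c (delta_mx 0 j - delta_mx 0 k))).
  rewrite sub_wL_sum_leecos expr2 mulr_suml -sumrMnl; apply: eq_bigr => j _.
  rewrite mulr_sumr -sumrMnl; apply: eq_bigr => k _.
  by rewrite leecos_mul !dotDr dotNr !dot_delta.
under eq_bigr do rewrite sqr_dev.
rewrite exchange_big (eq_bigr (fun=> #|C|%:Z)) => [|j _].
  by rewrite sumr_const card_ord PoszM -[n%:Z]natz mulr_natr.
rewrite exchange_big /=.
under eq_bigr do
  rewrite big_split /= (sum_leecos_deltaD linC projC) (sum_leecos_deltaB linC projC) add0r.
by rewrite (bigD1 j) //= eqxx big1 ?addr0 // => k; rewrite eq_sym => /negPf ->.
Qed.

End LeeMoments.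

Lemma double_len_le_card n (C : {set 'rV['Z_4]_n}) :
  Z4_linear C -> projective C -> (2 * n <= #|C|)%N.
Proof.
move=> linC projC; have := sum_sqr_dev_wL linC projC.
rewrite (bigD1 (0 : 'rV['Z_4]_n)) //=; last by case: linC.
rewrite wL0 subr0 expr2 -mulr_natr -!PoszM => E.
have : ((n * n * 2)%:Z <= (#|C| * n)%:Z)%R.
  by rewrite -E lerDl; apply: sumr_ge0 => c _; rewrite mulrn_wge0 // sqr_ge0.
rewrite lez_nat mulnAC [(n * 2)%N]mulnC leq_mul2r => /orP[/eqP n0|//].
by rewrite [n in (2 * n)%N]n0.
Qed.

Lemma divn_mul_subn1 M m : (m < M - 1)%N -> (M * m %/ (M - 1))%N = m.
Proof.
move=> lt_m; have M_pos : (0 < M)%N by lia.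
rewrite -[X in (X * m)%N](subnK M_pos) mulnDl mul1n [(_ * m)%N]mulnC.
by rewrite divnMDl ?divn_small ?addn0 //; lia.
Qed.

Lemma dL_eq n (C : {set 'rV['Z_4]_n}) w :
  (exists c, [/\ c \in C, c != 0 & wL c = w]) ->
  (forall c, c \in C -> c != 0 -> (w <= wL c)%N) -> dL C = w.
Proof.
move=> [c [cC c0 <-]] wC; apply/eqP; rewrite eqn_leq; apply/andP; split.
  have := @bigmin_le_cond _ nat _ (2 * n)%N c (fun d => (d \in C) && (d != 0)) (@wL n).
  by rewrite cC c0 minEnat; apply.
apply: (big_ind (fun x => wL c <= x)%N); first exact: wL_le.
  by move=> x y; rewrite leq_min => -> ->.
by move=> d /andP[]; apply: wC.
Qed.

Lemma plotkin_optimal_dL n (C : {set 'rV['Z_4]_n}) :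
  Z4_linear C -> projective C -> plotkin_optimal C -> (2 < #|C|)%N -> dL C = n.
Proof.
move=> linC projC optC C_gt2; rewrite optC divn_mul_subn1 //.
by have := double_len_le_card linC projC; lia.
Qed.

Lemma two_lee_weights_plotkin n (C : {set 'rV['Z_4]_n}) :
  Z4_linear C -> projective C -> plotkin_optimal C -> two_lee_weights C ->
  exists w, [/\ (0 < n)%N, (n < w)%N & forall c, c \in C -> c != 0 -> wL c = n \/ wL c = w].
Proof.
move=> linC projC optC [w1 [w2 [w12 ex1 ex2 wC]]].
wlog lt12 : w1 w2 w12 ex1 ex2 wC / (w1 < w2)%N.
  move=> IH; case: (ltngtP w1 w2) => [|lt21|//]; first exact: IH.
  by apply: (IH w2 w1) => // [/esym //|c cC c0]; rewrite or_comm; apply: wC.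
have [c1 [c1C c10 wc1]] := ex1; have [c2 [c2C c20 wc2]] := ex2.
have C_gt2 : (2 < #|C|)%N.
  apply/card_gt2P; exists 0, c1, c2; split; first by split => //; case: linC.
  by rewrite eq_sym c10 c20; split => //; apply/eqP => c12; apply: w12; rewrite -wc1 -wc2 c12.
have w1n : w1 = n.
  rewrite -(plotkin_optimal_dL linC projC optC C_gt2); apply/esym/dL_eq => // c cC c0.
  by case: (wC c cC c0) => ->; lia.
move: wc1 lt12 wC; rewrite w1n => wc1 lt_nw2 wC.
by exists w2; split; rewrite // -wc1 lt0n wL_eq0.
Qed.

Lemma sum_by_values (T : finType) (V : eqType) (R : nmodType) (A : {set T})
    (h : T -> V) (F : V -> R) (s : seq V) :
  uniq s -> (forall x, x \in A -> h x \in s) ->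
  \sum_(x in A) F (h x) = \sum_(v <- s) F v *+ #|[set x in A | h x == v]|.
Proof.
move=> uniq_s hA.
transitivity (\sum_(x in A) \sum_(v <- s | v == h x) F v).
  by apply: eq_bigr => x xA; rewrite -big_filter filter_pred1_uniq ?hA // big_seq1.
rewrite (exchange_big_dep predT) //=; apply: eq_bigr => v _.
by rewrite -sumr_const; apply: eq_bigl => x; rewrite inE eq_sym.
Qed.

Section TwoLeeWeights.
Variables (n : nat) (C : {set 'rV['Z_4]_n}) (w : nat).
Hypotheses (linC : Z4_linear C) (projC : projective C).
Hypotheses (n_gt0 : (0 < n)%N) (n_lt_w : (n < w)%N).
Hypothesis wLC : forall c, c \in C -> c != 0 -> wL c = n \/ wL c = w.

Local Notation count P := #|[set c in C | P c]|.

Lemma sum_over_spectrum (g : 'rV['Z_4]_n -> 'rV['Z_4]_n) (F : nat -> int) :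
    (forall c, c \in C -> g c \in C) ->
  \sum_(c in C) F (wL (g c)) = F 0%N *+ count (fun c => wL (g c) == 0%N)
    + F n *+ count (fun c => wL (g c) == n) + F w *+ count (fun c => wL (g c) == w).
Proof.
move=> gC; rewrite (@sum_by_values _ _ _ _ (fun c => wL (g c)) F [:: 0%N; n; w]).
- by rewrite !big_cons big_nil addr0 addrA.
- by rewrite /= !inE; lia.
move=> c /gC gcC; have [->|g0] := eqVneq (g c) 0; first by rewrite wL0 inE.
by rewrite !inE; case: (wLC gcC g0) => ->; rewrite eqxx ?orbT.
Qed.

Lemma count_wL_eq0 : count (fun c => wL c == 0%N) = 1%N.
Proof.
transitivity #|[set (0 : 'rV['Z_4]_n)]|; last exact: cards1.
apply: eq_card => c; rewrite !inE wL_eq0.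
by case: eqP => [->|]; rewrite ?andbF ?andbT //; case: linC.
Qed.

Lemma card_by_weight : (1 + count (fun c => wL c == n) + count (fun c => wL c == w))%N = #|C|.
Proof.
have := @sum_over_spectrum id (fun=> 1) (fun=> id); rewrite sumr_const count_wL_eq0.
lia.
Qed.

Lemma heavy_count_gap : (count (fun c => wL c == w) * (w - n))%N = n.
Proof.
have := sum_over_spectrum (fun v => n%:Z - v%:Z) (fun=> id).
rewrite (sum_dev_wL linC projC) count_wL_eq0; lia.
Qed.

Lemma double_heavy_weight : (2 * w)%N = #|C|.
Proof.
have := sum_over_spectrum (fun v => (n%:Z - v%:Z) ^+ 2 *+ 2) (fun=> id).
rewrite (sum_sqr_dev_wL linC projC) count_wL_eq0.
have := heavy_count_gap; nia.
Qed.

(* The first moment of the doubles c + c, whose weights lie in {0, n, w},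
   together with heavy_count_gap shows that B times as many doubles have
   weight w as vanish, B being the frequency of w. *)
Lemma heavy_count_double_kernel :
  ((count (fun c => wL c == w)).+1 * count (fun c => (c + c == 0)%R) <= #|C|)%N.
Proof.
have addC c : c \in C -> c + c \in C by move=> cC; apply: Z4_linearD.
have kerE : count (fun c => wL (c + c) == 0%N) = count (fun c => c + c == 0).
  by apply: eq_card => c; rewrite !inE wL_eq0.
have := sum_over_spectrum (fun v => n%:Z - v%:Z) addC.
have := sum_over_spectrum (fun=> 1) addC.
rewrite sumr_const (sum_dev_wL_double linC projC) kerE.
have := heavy_count_gap; nia.
Qed.

End TwoLeeWeights.

Lemma pow2_gap_solution (k B m : nat) : (0 < m)%N -> (B * (2 ^ k - m) = m)%N ->
  exists t, [/\ (0 < t <= k)%N, B = (2 ^ t - 1)%N & m = (2 ^ k - 2 ^ (k - t))%N].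
Proof.
move=> m_gt0 gap.
have m_le : (m <= 2 ^ k)%N by move: gap; rewrite leqNgt; case: ltnP => //; lia.
have eq_mul : (B * 2 ^ k = m * B.+1)%N by move: gap; rewrite mulnBr; lia.
have : (B.+1 %| 2 ^ k)%N by rewrite -(Gauss_dvdr _ (coprimeSn B)) eq_mul dvdn_mull.
case/dvdn_pfactor => // t t_le Bt; exists t.
have t_gt0 : (0 < t)%N.
  by rewrite lt0n; apply/eqP => t0; move: Bt gap; rewrite t0 expn0 => -[->]; lia.
have B_eq : B = (2 ^ t - 1)%N by rewrite -Bt subn1.
have pow_k : (2 ^ k = 2 ^ t * 2 ^ (k - t))%N by rewrite -expnD subnKC.
have : (m * 2 ^ t = (2 ^ t - 1) * 2 ^ (k - t) * 2 ^ t)%N.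
  by rewrite -B_eq -Bt -eq_mul pow_k Bt mulnA mulnAC.
move/eqP; rewrite eqn_pmul2r ?expn_gt0 // => /eqP ->.
by rewrite t_gt0 t_le B_eq pow_k mulnBl mul1n.
Qed.

Section Z4Type.
Variables (n k1 k2 : nat) (C : {set 'rV['Z_4]_n}).
Hypothesis typeC : Z4_type k1 k2 C.

Lemma card_Z4_type : #|C| = (2 ^ (2 * k1 + k2))%N.
Proof.
case: typeC => f [_ f_inj f_onto].
have -> : C = f @: setT.
  apply/setP => x; apply/idP/imsetP => [/f_onto [a <-]|[a _ ->]]; first by exists a.
  by apply/f_onto; exists a.
by rewrite card_imset // cardsT card_prod !card_mx !card_ord !mul1n expnD expnM.
Qed.

Lemma Z4_type_double_kernel : (2 ^ (k1 + k2) <= #|[set c in C | (c + c == 0)%R]|)%N.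
Proof.
case: typeC => f [f_add f_inj f_onto].
have f0 : f (0, 0) = 0 by apply: (addrI (f (0, 0))); rewrite -f_add !addr0.
pose g (p : 'rV['Z_2]_k1 * 'rV['Z_2]_k2) := f (map_mx Z2_to_2Z4 p.1, p.2).
have g_inj : injective g.
  move=> [u b] [v d] /f_inj [/matrixP uv ->]; congr pair; apply/matrixP => i j.
  by apply: Z2_to_2Z4_inj; have := uv i j; rewrite !mxE.
have <- : #|g @: setT| = (2 ^ (k1 + k2))%N.
  by rewrite card_imset // cardsT card_prod !card_mx !card_ord !mul1n expnD.
apply/subset_leq_card/subsetP => _ /imsetP[[u b] _ ->]; rewrite inE /g.
apply/andP; split; first by apply/f_onto; eexists.
rewrite -f_add -f0 /=; apply/eqP; congr (f (_, _)); apply/rowP => i; rewrite !mxE.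
  exact: Z2_to_2Z4_double.
by elim/Z2_ind: (b 0 i); apply: val_inj.
Qed.

End Z4Type.

Lemma lee_weight_distribution n k1 k2 (C : {set 'rV['Z_4]_n}) :
  Z4_linear C -> Z4_type k1 k2 C -> plotkin_optimal C -> projective C ->
  two_lee_weights C ->
  let K := (2 * k1 + k2)%N in
  exists t : nat,
    (1 <= t <= k1)%N /\
    [/\ (2 * n)%N = (2 ^ K - 2 ^ (K - t))%N,
        #|C| = (2 ^ K)%N,
        (forall c, c \in C -> c != 0 ->
           wL c = (2 ^ (K - 1) - 2 ^ (K - t - 1))%N \/ wL c = (2 ^ (K - 1))%N),
        #|[set c in C | wL c == (2 ^ (K - 1) - 2 ^ (K - t - 1))%N]| = (2 ^ K - 2 ^ t)%N &
        #|[set c in C | wL c == (2 ^ (K - 1))%N]| = (2 ^ t - 1)%N].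
Proof.
move=> linC typeC optC projC /(two_lee_weights_plotkin linC projC optC).
move=> [w [n_gt0 n_lt_w wC]] K; have cardC := card_Z4_type typeC.
have two_w := double_heavy_weight linC projC n_gt0 n_lt_w wC.
have [k K_eq] : exists k, K = k.+1.
  exists K.-1; rewrite prednK // lt0n; apply/eqP => K0.
  by move: two_w; rewrite cardC -/K K0; lia.
have w_eq : w = (2 ^ k)%N by move: two_w; rewrite cardC -/K K_eq expnS; lia.
subst w; have [t [t_range B_eq n_eq]] := pow2_gap_solution n_gt0
  (heavy_count_gap linC projC n_gt0 n_lt_w wC).
have t_le : (t <= k1)%N.
  have := heavy_count_double_kernel linC projC n_gt0 n_lt_w wC.
  rewrite B_eq subn1 prednK ?expn_gt0 //.
  move/(leq_trans (leq_mul (leqnn _) (Z4_type_double_kernel typeC))).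
  by rewrite cardC -expnD leq_exp2l //; lia.
exists t; split; first by case/andP: t_range => -> _.
have pow_K : (2 ^ K = 2 * 2 ^ k)%N by rewrite K_eq expnS.
have pow_Kt : (2 ^ (K - t) = 2 * 2 ^ (k - t))%N by rewrite K_eq subSn ?expnS //; case/andP: t_range.
have [-> ->] : (K - 1 = k /\ K - t - 1 = k - t)%N by lia.
rewrite pow_K pow_Kt -n_eq; split => //; first by rewrite n_eq mulnBr.
have := card_by_weight linC n_gt0 n_lt_w wC; rewrite B_eq -two_w.
by have := expn_gt0 2 t; lia.
Qed.

Lemma wH_Gray n (c : 'rV['Z_4]_n) : wH (Gray c) = wL c.
Proof.
rewrite /wH /wL -sum1_card (eq_bigl (fun p => Gray c p)) => [|p]; last by rewrite inE.
rewrite big_mkcond; transitivity (\sum_i \sum_b (if Gray c (i, b) then 1 else 0))%N.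
  by rewrite pair_bigA; apply: eq_bigr => -[i b].
apply: eq_bigr => i _.
by rewrite big_bool /= !ffunE /=; elim/Z4_ind: (c 0 i).
Qed.

Lemma Gray_inj n : injective (@Gray n).
Proof.
move=> c d /ffunP Gcd; apply/rowP => i.
have := Gcd (i, false); have := Gcd (i, true); rewrite !ffunE /=.
by elim/Z4_ind: (c 0 i); elim/Z4_ind: (d 0 i).
Qed.

Lemma card_GrayImage_wH n (C : {set 'rV['Z_4]_n}) w :
  #|[set x in GrayImage C | wH x == w]| = #|[set c in C | wL c == w]|.
Proof.
rewrite -(card_imset _ (@Gray_inj n)); apply: eq_card => x.
rewrite !inE; apply/andP/imsetP => [[/imsetP [c cC ->] wx]|[c]].
  by exists c; rewrite // inE cC -wH_Gray.
by rewrite inE => /andP[cC wc] ->; rewrite wH_Gray wc imset_f.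
Qed.

Local Close Scope ring_scope.
Unset Implicit Arguments.

Theorem mainTheorem3 (n k1 k2 : nat) (C : {set 'rV['Z_4]_n}) :
  Z4_linear C -> Z4_type k1 k2 C -> plotkin_optimal C -> projective C ->
  two_lee_weights C ->
  let K := (2 * k1 + k2)%N in
  exists t : nat,
    (1 <= t <= k1)%N /\
    [/\ (2 * n)%N = (2 ^ K - 2 ^ (K - t))%N,
        #|GrayImage C| = (2 ^ K)%N,
        (forall x, x \in GrayImage C -> (0 < wH x)%N ->
           wH x = (2 ^ (K - 1) - 2 ^ (K - t - 1))%N \/ wH x = (2 ^ (K - 1))%N),
        #|[set x in GrayImage C | wH x == (2 ^ (K - 1) - 2 ^ (K - t - 1))%N]|
          = (2 ^ K - 2 ^ t)%N &
        #|[set x in GrayImage C | wH x == (2 ^ (K - 1))%N]| = (2 ^ t - 1)%N].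
Proof.
move=> linC typeC optC projC twoC K.
have [t [t_range [len_eq card_eq wC countA countB]]] :=
  lee_weight_distribution linC typeC optC projC twoC.
exists t; split => //; split; rewrite ?card_GrayImage_wH //.
  by rewrite card_imset //; apply: Gray_inj.
by move=> _ /imsetP[c cC ->]; rewrite wH_Gray lt0n wL_eq0; apply: wC.
Qed.
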